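(* Let $\Bbbk$ be a field of characteristic zero and $b\in\Bbbk$. Then $\mathcal P_b=\mathrm{span}\{v^{(b)}_n\mid n\in\mathbb N\}=\Bbbk[t+t^{-1}]\,t^{-b}dt^b$, and the $\mathcal O$-action in this basis is $$u_n\cdot v^{(b)}_m=-(bn+m)v^{(b)}_{n+m}+4(b(n-1)+m)v^{(b)}_{n+m-2}\qquad(n\ge1,\ m\ge0).$$ Equivalently, writing $s=t+t^{-1}$, for all polynomials $g,h\in\Bbbk[x]$, $$g(s)(t^2-1)\partial\cdot\big(h(s)\,t^{-b}dt^b\big)=\Big((g(s)h'(s)+b\,g'(s)h(s))(s^2-4)+b\,g(s)h(s)s\Big)t^{-b}dt^b.$$
   Context: $\mathcal W=\Bbbk[t,t^{-1}]\partial$ ($\partial=d/dt$) is the Witt algebra with $L_n=-t^{n+1}\partial$. The tensor density module $I(0,b)=t^{-b}\Bbbk[t,t^{-1}]dt^b$ has $\mathcal W$-action $f\partial\cdot(g\,dt^b)=(fg'+bf'g)dt^b$ and basis $I_n=-t^{n-b}dt^b$ ($n\in\mathbb Z$). $\mathcal O\subseteq\mathcal W$ is spanned by $L_n-L_{-n}$ ($n\ge1$); $\mathcal P_b=\mathrm{span}\{I_n+I_{-n}\mid n\ge0\}$, an $\mathcal O$-submodule of $I(0,b)$. Define $u_n=-(t+t^{-1})^{n-1}(t^2-1)\partial\in\mathcal O$ for $n\ge1$ and $v^{(b)}_n=-(t+t^{-1})^nt^{-b}dt^b$ for $n\ge0$. In the displayed formula, $g'$, $h'$ denote derivatives of the polynomials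 $g,h$ evaluated at $s$. *)

From HB Require Import structures.
From mathcomp Require Import all_boot all_order all_algebra.
From mathcomp Require Import fraction generic_quotient.
Set Implicit Arguments. Unset Strict Implicit. Unset Printing Implicit Defensive.
Import Order.TTheory GRing.Theory.
Local Open Scope ring_scope.

(* The Laurent polynomial ring k[t,t^{-1}] is realised inside the field of
   rational functions k(t) = {fraction {poly k}}, with t = 'X. *)
Section Witt.
Variable K : fieldType.

Notation RF := {fraction {poly K}}.

Definition tf (p : {poly K}) : RF := FracField.tofrac p.
Definition kc (c : K) : RF := tf c%:P.
Definition tvar : RF := tf 'X.

(* d/dt on rational functions: quotient rule on a representative n/d
   (the result does not depend on the representative). *)
Definition dt (x : RF) : RF :=
  let r := repr x in
  tf ((\n_r)^`() * \d_r - \n_r * (\d_r)^`()) / tf ((\d_r) ^+ 2).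

Definition laurent (x : RF) : Prop := exists (p : {poly K}) (N : nat), x = tf p / tvar ^+ N.

(* A vector field f\partial in W is encoded by f (a Laurent polynomial).
   An element g t^{-b} dt^b of I(0,b) is encoded by the Laurent polynomial g.
   The action f\partial . (G dt^b) = (f G' + b f' G) dt^b with G = g t^{-b}
   gives, since G' = (g' - b g t^{-1}) t^{-b}:
     f\partial . (g t^{-b} dt^b) = (f g' - b f g t^{-1} + b f' g) t^{-b} dt^b. *)
Definition act (b : K) (f g : RF) : RF :=
  f * dt g - kc b * f * g / tvar + kc b * dt f * g.

(* L_n = - t^{n+1} \partial ,  I_n = - t^{n-b} dt^b *)
Definition Lw (n : int) : RF := - tvar ^ (n + 1).
Definition Id (n : int) : RF := - tvar ^ n.

Definition sv : RF := tvar + tvar^-1.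

Definition uw (n : nat) : RF := - (sv ^+ n.-1 * (tvar ^+ 2 - 1)).
Definition vd (n : nat) : RF := - sv ^+ n.

Definition evs (h : {poly K}) : RF := (map_poly kc h).[sv].

Definition inspan (F : nat -> RF) (x : RF) : Prop :=
  exists (n : nat) (c : nat -> K), x = \sum_(i < n) kc (c i) * F i.

(* generators I_n + I_{-n} (n >= 0) of P_b *)
Definition Pgen (n : nat) : RF := Id n%:Z + Id (- n%:Z).

End Witt.

From Pilot Require Import Defs.
From HB Require Import structures.
From mathcomp Require Import all_boot all_order all_algebra.
From mathcomp Require Import fraction generic_quotient.
From mathcomp Require Import ring zify.
Set Implicit Arguments.
Unset Strict Implicit.
Unset Printing Implicit Defensive.
Import GRing.Theory.
Local Open Scope quotient_scope.
Local Open Scope ring_scope.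

(* In k(t) the derivation [dt] is computed by the chain rule: for a derivation d
   with d t = 1 and s = t + t^-1 one has d h(s) = h'(s) (1 - t^-2), and the two
   identities (t^2 - 1)(1 - t^-2) = s^2 - 4 and 2t - (t^2 - 1)/t = s turn the
   action of g(s)(t^2 - 1)d on h(s) t^-b dt^b into the stated polynomial formula
   in s.  The formula for u_n . v_m is its instance g = -x^(n-1), h = -x^m.
   Since t^(n+2) + t^-(n+2) = s (t^(n+1) + t^-(n+1)) - (t^n + t^-n), the
   generators I_n + I_-n of P_b span exactly k[s], as the v_n = -s^n do;
   characteristic 0 is used only to invert 2 in I_0 + I_0 = -2. *)

(* Stated over an abstract field: [ring] and [field] are impractically slow on
   [{fraction {poly K}}] itself. *)
Section QuotientRule.
Variable F : fieldType.

Definition quotient_rule (a a' b b' : F) := (a' * b - a * b') / b ^+ 2.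

Lemma quotient_ruleB (a a' b b' c c' e e' : F) : b != 0 -> e != 0 ->
  quotient_rule (a * e - c * b) (a' * e + a * e' - (c' * b + c * b')) (b * e) (b' * e + b * e')
  = quotient_rule a a' b b' - quotient_rule c c' e e'.
Proof. by move=> b_neq0 e_neq0; rewrite /quotient_rule; field; rewrite b_neq0 e_neq0. Qed.

Lemma quotient_ruleM (a a' b b' c c' e e' : F) : b != 0 -> e != 0 ->
  quotient_rule (a * c) (a' * c + a * c') (b * e) (b' * e + b * e')
  = quotient_rule a a' b b' * (c / e) + a / b * quotient_rule c c' e e'.
Proof. by move=> b_neq0 e_neq0; rewrite /quotient_rule; field; rewrite b_neq0 e_neq0. Qed.

End QuotientRule.

Section Derivation.
Variables (K F : fieldType) (f : {rmorphism K -> F}) (d : {additive F -> F}).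
Hypothesis dM : forall x y, d (x * y) = d x * y + x * d y.
Hypothesis d_const : forall c, d (f c) = 0.

Lemma derivation1 : d 1 = 0.
Proof. by rewrite -(rmorph1 f) d_const. Qed.

Lemma derivationV x : x != 0 -> d x^-1 = - d x / x ^+ 2.
Proof.
move=> x_neq0; have := dM x x^-1; rewrite mulfV // derivation1 => /esym/eqP.
by rewrite addr_eq0 => /eqP dxV; apply: (mulfI x_neq0); rewrite -[LHS]opprK -dxV; field.
Qed.

Lemma derivation_horner (p : {poly K}) x :
  d (map_poly f p).[x] = (map_poly f p^`()).[x] * d x.
Proof.
elim/poly_ind: p => [|p c IHp]; first by rewrite deriv0 !rmorph0 horner0 raddf0 mul0r.
rewrite derivMXaddC !(rmorphD, rmorphM) /= map_polyX map_polyC !hornerE raddfD dM d_const IHp.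
ring.
Qed.

Variable T : F.
Hypotheses (T_neq0 : T != 0) (dT : d T = 1).
Local Notation S := (T + T^-1).

(* With [d = dt] and [T = tvar] this is [act] of Defs. *)
Definition density_act (beta u v : F) := u * d v - beta * u * v / T + beta * d u * v.

Lemma density_act_horner (b : K) (g h : {poly K}) :
  density_act (f b) ((map_poly f g).[S] * (T ^+ 2 - 1)) (map_poly f h).[S]
  = (map_poly f ((g * h^`() + b%:P * g^`() * h) * ('X ^+ 2 - 4%:R%:P)
                 + b%:P * g * h * 'X)).[S].
Proof.
have dS : (T ^+ 2 - 1) * d S = S ^+ 2 - 4%:R.
  by rewrite raddfD derivationV // dT; field.
have dT2 : d (T ^+ 2 - 1) = T + T by rewrite raddfB derivation1 expr2 dM dT; ring.
have cross : T + T - (T ^+ 2 - 1) / T = S by field.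
rewrite /density_act dM !derivation_horner dT2.
set G := (map_poly f g).[S]; set G' := (map_poly f g^`()).[S].
set H := (map_poly f h).[S]; set H' := (map_poly f h^`()).[S].
transitivity ((G * H' + f b * G' * H) * ((T ^+ 2 - 1) * d S)
              + f b * G * H * (T + T - (T ^+ 2 - 1) / T)); first by ring.
(* Opaque, so that [rmorphD] does not unfold [4%:R%:P] into [polyC (1 + 1 + 1 + 1)]. *)
set four := (4%:R : K)%:P.
rewrite dS cross !(rmorphD, rmorphN, rmorphM) /= map_polyX !map_polyC !hornerE.
by rewrite -/G -/G' -/H -/H'; ring.
Qed.

End Derivation.

Lemma add_inv_exprSS (F : fieldType) (T : F) n : T != 0 ->
  T ^+ n.+2 + (T ^+ n.+2)^-1 = (T + T^-1) * (T ^+ n.+1 + (T ^+ n.+1)^-1) - (T ^+ n + (T ^+ n)^-1).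
Proof.
move=> T_neq0; have Tn_neq0 := expf_neq0 n T_neq0.
by rewrite !exprS; field; rewrite Tn_neq0 T_neq0.
Qed.

Section RationalFunctions.
Variable K : fieldType.
Local Notation RF := {fraction {poly K}}.
Local Notation t := (tvar K).

HB.instance Definition _ := GRing.RMorphism.copy (@tf K) (@FracField.tofrac _).
HB.instance Definition _ := GRing.RMorphism.copy (@kc K) (@tf K \o polyC).

Lemma tf_eq0 (p : {poly K}) : (tf p == 0) = (p == 0).
Proof. exact: tofrac_eq0. Qed.

Lemma tf_inj : injective (@tf K).
Proof. by move=> p q /eqP; rewrite /tf tofrac_eq => /eqP. Qed.

Lemma mul_tf_denom (x : RF) : x * tf (\d_(repr x)) = tf (\n_(repr x)).
Proof.
rewrite -[x in x * _]reprK /tf; unlock FracField.tofrac; set r := repr x.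
transitivity (\pi_RF (FracField.mulf r (Ratio \d_r 1))); first by rewrite FracField.pi_mul.
apply/eqmodP; rewrite /= /FracField.equivf /FracField.mulf /=.
have d1_neq0 : \d_r * 1 != 0 by rewrite mulr1 denom_ratioP.
by rewrite !numden_Ratio ?oner_neq0 // !mulr1 mulrC.
Qed.

Lemma fracP (x : RF) : exists p q, q != 0 /\ x = tf p / tf q.
Proof.
have d_neq0 := denom_ratioP (repr x).
exists (\n_(repr x)), (\d_(repr x)); split => //.
by rewrite -mul_tf_denom mulfK // tf_eq0.
Qed.

Lemma dt_quotient (p q : {poly K}) : q != 0 ->
  dt (tf p / tf q) = quotient_rule (tf p) (tf p^`()) (tf q) (tf q^`()).
Proof.
move=> q_neq0; rewrite /dt; set x := tf p / tf q.
have := mul_tf_denom x; set n := \n_(repr x); set d := \d_(repr x) => nd_x.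
have d_neq0 : d != 0 by exact: denom_ratioP.
have cross : p * d = n * q.
  by apply: tf_inj; rewrite !rmorphM /= -nd_x /x mulrAC divfK // tf_eq0.
have dcross : p^`() * d + p * d^`() = n^`() * q + n * q^`() by rewrite -!derivM cross.
have -> : quotient_rule (tf p) (tf p^`()) (tf q) (tf q^`())
          = tf (p^`() * q - p * q^`()) / tf (q ^+ 2).
  by rewrite /quotient_rule rmorphXn rmorphB !rmorphM.
apply/eqP; rewrite eqr_div ?tf_eq0 ?expf_neq0 // -!rmorphM; apply/eqP; congr tf.
apply/eqP; rewrite -subr_eq0; apply/eqP.
transitivity (d * q * (n^`() * q + n * q^`() - (p^`() * d + p * d^`()))
               + (d^`() * q + d * q^`()) * (p * d - n * q)); first by ring.
by rewrite cross dcross !subrr !mulr0 addr0.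
Qed.

Lemma dt_tf (p : {poly K}) : dt (tf p) = tf p^`().
Proof.
rewrite -[tf p]divr1 -(rmorph1 (@tf K)) dt_quotient ?oner_neq0 // /quotient_rule.
by rewrite derivC rmorph0 !rmorph1 mulr0 subr0 mulr1 expr1n divr1.
Qed.

Lemma dt_is_zmod_morphism : zmod_morphism (@dt K).
Proof.
move=> x y; have [a [b [b_neq0 ->]]] := fracP x; have [c [e [e_neq0 ->]]] := fracP y.
have [tb_neq0 te_neq0] : tf b != 0 /\ tf e != 0 by rewrite !tf_eq0.
rewrite -mulNr (addf_div _ _ tb_neq0 te_neq0) mulNr -!rmorphM -rmorphN -rmorphD.
rewrite !dt_quotient ?mulf_neq0 // !(derivD, derivN, derivM, rmorphD, rmorphN, rmorphM) /=.
exact: quotient_ruleB tb_neq0 te_neq0.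
Qed.
HB.instance Definition _ := GRing.isZmodMorphism.Build RF RF (@dt K) dt_is_zmod_morphism.

Lemma dtM (x y : RF) : dt (x * y) = dt x * y + x * dt y.
Proof.
have [a [b [b_neq0 ->]]] := fracP x; have [c [e [e_neq0 ->]]] := fracP y.
have [tb_neq0 te_neq0] : tf b != 0 /\ tf e != 0 by rewrite !tf_eq0.
rewrite mulf_div -!rmorphM !dt_quotient ?mulf_neq0 // !(derivM, rmorphD, rmorphM) /=.
exact: quotient_ruleM tb_neq0 te_neq0.
Qed.

Lemma dt_kc (c : K) : dt (kc c) = 0.
Proof. by rewrite dt_tf derivC rmorph0. Qed.

Lemma dt_t : dt t = 1.
Proof. by rewrite dt_tf derivX rmorph1. Qed.

Lemma t_neq0 : t != 0.
Proof. by rewrite tf_eq0 polyX_eq0. Qed.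

End RationalFunctions.

Section MonomialAction.
Variable R : comNzRingType.

Lemma mulXn_derivXn (k j : nat) : 'X^k * ('X^j)^`() = 'X^((k + j).-1) *+ j :> {poly R}.
Proof.
case: j => [|j]; first by rewrite derivXn !mulr0n mulr0.
by rewrite derivXn mulrnAr -exprD addnS.
Qed.

Lemma monomial_action_poly (b : R) (n m : nat) : (0 < n)%N ->
  (- 'X^(n.-1) * (- 'X^m)^`() + b%:P * (- 'X^(n.-1))^`() * - 'X^m) * ('X ^+ 2 - 4%:R%:P)
    + b%:P * - 'X^(n.-1) * - 'X^m * 'X
  = - (b * n%:R + m%:R)%:P * - 'X^(n + m)
    + (4 * (b * (n%:R - 1) + m%:R))%:P * - 'X^(n + m - 2).
Proof.
case: n => // n _ /=.
transitivity (('X^n * ('X^m)^`() + b%:P * ('X^m * ('X^n)^`())) * ('X ^+ 2 - 4%:R%:P)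
              + b%:P * 'X^(n + m) * 'X); first by rewrite !derivN exprD; ring.
rewrite !mulXn_derivXn [(m + n)%N]addnC addSn.
case E: (n + m)%N => [|N] /=.
  have [-> ->] : n = 0%N /\ m = 0%N by lia.
  by rewrite !mulr0n; ring.
have -> : (N.+2 - 2 = N)%N by lia.
by rewrite !exprS; ring.
Qed.

End MonomialAction.

Section TensorDensities.
Variable K : fieldType.
Local Notation t := (tvar K).
Local Notation s := (sv K).

Fact sv_comm : commr_rmorph (@kc K) s.
Proof. by move=> c; apply: mulrC. Qed.
HB.instance Definition _ := GRing.RMorphism.copy (@evs K) (horner_morph sv_comm).

Lemma evsC (c : K) : evs c%:P = kc c.
Proof. by rewrite /evs map_polyC hornerC. Qed.

Lemma evsX : evs 'X = s.
Proof. by rewrite /evs map_polyX hornerX. Qed.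

Lemma act_evs (b : K) (g h : {poly K}) :
  act b (evs g * (t ^+ 2 - 1)) (evs h) =
    evs ((g * h^`() + b%:P * g^`() * h) * ('X ^+ 2 - 4%:R%:P) + b%:P * g * h * 'X).
Proof. exact: (density_act_horner (@dtM K) (@dt_kc K) (@t_neq0 K) (@dt_t K)). Qed.

Lemma act_uw_vd (b : K) (n m : nat) : (1 <= n)%N ->
  act b (uw K n) (vd K m) =
    - kc (b * n%:R + m%:R) * vd K (n + m)
    + kc (4 * (b * (n%:R - 1) + m%:R)) * vd K (n + m - 2).
Proof.
move=> n_gt0.
have vdE k : vd K k = evs (- 'X^k) by rewrite /vd rmorphN rmorphXn /= evsX.
have -> : uw K n = evs (- 'X^(n.-1)) * (t ^+ 2 - 1).
  by rewrite /uw rmorphN rmorphXn /= evsX mulNr.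
rewrite vdE act_evs monomial_action_poly // !vdE -!evsC.
by rewrite -(rmorphN (@evs K)) -!(rmorphM (@evs K)) -(rmorphD (@evs K)).
Qed.

End TensorDensities.

Section Spans.
Variable K : fieldType.
Local Notation RF := {fraction {poly K}}.
Local Notation t := (tvar K).
Local Notation s := (sv K).
Implicit Types (F : nat -> RF) (x y : RF).

Lemma inspan_ind F (P : RF -> Prop) :
  P 0 -> (forall x y, P x -> P y -> P (x + y)) -> (forall c x, P x -> P (kc c * x)) ->
  (forall i, P (F i)) -> forall x, inspan F x -> P x.
Proof.
move=> P0 PD PZ PF x [n [c ->]]; elim: n => [|n IHn]; first by rewrite big_ord0.
by rewrite big_ord_recr /=; apply: PD => //; apply: PZ.
Qed.

Lemma inspan0 F : inspan F 0.
Proof. by exists 0%N, (fun _ => 0); rewrite big_ord0. Qed.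

Lemma inspanD F x y : inspan F x -> inspan F y -> inspan F (x + y).
Proof.
have widen n N (c : nat -> K) : (n <= N)%N ->
    \sum_(i < n) kc (c i) * F i = \sum_(i < N) kc (if (i < n)%N then c i else 0) * F i.
  move=> le_nN; rewrite (big_ord_widen N (fun i => kc (c i) * F i) le_nN) big_mkcond /=.
  by apply: eq_bigr => i _; case: ifP; rewrite ?rmorph0 ?mul0r.
move=> [n1 [a ->]] [n2 [c ->]].
exists (n1 + n2)%N, (fun i => (if (i < n1)%N then a i else 0) + (if (i < n2)%N then c i else 0)).
rewrite (widen n1 (n1 + n2)%N a (leq_addr n2 n1)) (widen n2 (n1 + n2)%N c (leq_addl n1 n2)).
by rewrite -big_split; apply: eq_bigr => i _; rewrite rmorphD mulrDl.
Qed.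

Lemma inspanZ F c x : inspan F x -> inspan F (kc c * x).
Proof.
move=> [n [a ->]]; exists n, (fun i => c * a i); rewrite mulr_sumr.
by apply: eq_bigr => i _; rewrite rmorphM mulrA.
Qed.

Lemma inspan_gen F i : inspan F (F i).
Proof.
exists i.+1, (fun j => (j == i)%:R); rewrite big_ord_recr /= eqxx rmorph1 mul1r.
by rewrite big1 ?add0r // => j _; rewrite (ltn_eqF (ltn_ord j)) rmorph0 mul0r.
Qed.

Lemma inspan_evsP F :
  (forall i, exists h, F i = evs h) -> inspan F 1 -> (forall i, inspan F (s * F i)) ->
  forall x, inspan F x <-> exists h, x = evs h.
Proof.
move=> F_evs F1 FS x; split.
  apply: (inspan_ind (P := fun y => exists h, y = evs h)) => // [|_ _ [g ->] [h ->]|c _ [h ->]].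
  - by exists 0; rewrite rmorph0.
  - by exists (g + h); rewrite rmorphD.
  - by exists (c%:P * h); rewrite rmorphM /= evsC.
have inspan_sM : forall y, inspan F y -> inspan F (s * y).
  apply: (inspan_ind (P := fun y => inspan F (s * y))) => // [|y z|c y].
  - by rewrite mulr0; apply: inspan0.
  - by rewrite mulrDr; apply: inspanD.
  - by rewrite mulrCA; apply: inspanZ.
move=> [h ->]; elim/poly_ind: h => [|p c IHp]; first by rewrite rmorph0; apply: inspan0.
rewrite rmorphD rmorphM /= evsX evsC mulrC -[kc c]mulr1.
by apply: inspanD; [apply: inspan_sM | apply: inspanZ].
Qed.

Lemma inspan_vdP x : inspan (@vd K) x <-> exists h, x = evs h.
Proof.
apply: inspan_evsP => [i||i].
- by exists (- 'X^i); rewrite rmorphN rmorphXn /= evsX.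
- have -> : 1 = kc (- 1) * vd K 0 by rewrite /vd expr0 rmorphN rmorph1 mulrNN mulr1.
  exact: inspanZ (inspan_gen _ _).
- by rewrite /vd mulrN -exprS; apply: (inspan_gen _ i.+1).
Qed.

Lemma PgenE n : Pgen K n = - (t ^+ n + (t ^+ n)^-1).
Proof. by rewrite /Pgen /Id -invr_expz opprD. Qed.

Lemma Pgen_rec n : Pgen K n.+2 = s * Pgen K n.+1 - Pgen K n.
Proof. by rewrite !PgenE (add_inv_exprSS _ (@t_neq0 K)) mulrN opprB opprK addrC. Qed.

Lemma Pgen_evs n : exists h, Pgen K n = evs h.
Proof.
suff: (exists h, Pgen K n = evs h) /\ (exists h, Pgen K n.+1 = evs h) by case.
elim: n => [|n [[g IHg] [h IHh]]].
  split; first by exists (- 2%:R%:P); rewrite PgenE expr0 invr1 rmorphN /= evsC rmorph_nat.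
  by exists (- 'X); rewrite PgenE expr1 rmorphN /= evsX.
by split; [exists h | exists ('X * h - g); rewrite Pgen_rec IHg IHh rmorphB rmorphM /= evsX].
Qed.

Lemma inspan_PgenP : (2%:R : K) != 0 ->
  forall x, inspan (@Pgen K) x <-> exists h, x = evs h.
Proof.
move=> two_neq0; apply: inspan_evsP => [||[|i]]; first exact: Pgen_evs.
- have -> : 1 = kc (- 2%:R^-1) * Pgen K 0.
    rewrite PgenE expr0 invr1 rmorphN mulrNN -[1 + 1]/(2%:R : RF).
    by rewrite -(rmorph_nat (@kc K)) -rmorphM mulVf // rmorph1.
  exact: inspanZ (inspan_gen _ _).
- have -> : s * Pgen K 0 = kc 2%:R * Pgen K 1.
    by rewrite !PgenE expr0 expr1 invr1 rmorph_nat !mulrN mulrC.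
  exact: inspanZ (inspan_gen _ _).
- by rewrite -[s * _](subrK (Pgen K i)) -Pgen_rec; apply: inspanD; apply: inspan_gen.
Qed.

End Spans.

Theorem theorem4p30 (K : fieldType) (charK0 : [pchar K] =i pred0) (b : K) :
  (* P_b = span{ v^{(b)}_n | n in N } *)
  (forall x, inspan (@Pgen K) x <-> inspan (@vd K) x) /\
  (* span{ v^{(b)}_n } = k[t+t^{-1}] t^{-b} dt^b *)
  (forall x, inspan (@vd K) x <-> exists h : {poly K}, x = evs h) /\
  (* u_n . v_m = -(bn+m) v_{n+m} + 4(b(n-1)+m) v_{n+m-2} *)
  (forall n m : nat, (1 <= n)%N ->
     act b (uw K n) (vd K m) =
       - kc (b * n%:R + m%:R) * vd K (n + m)
       + kc (4 * (b * (n%:R - 1) + m%:R)) * vd K (n + m - 2)) /\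
  (* g(s)(t^2-1)\partial . (h(s) t^{-b}dt^b) = ((g h' + b g' h)(s^2-4) + b g h s) t^{-b}dt^b *)
  (forall g h : {poly K},
     act b (evs g * (tvar K ^+ 2 - 1)) (evs h) =
       evs ((g * h^`() + b%:P * g^`() * h) * ('X ^+ 2 - 4%:R%:P) + b%:P * g * h * 'X)).
Proof.
have two_neq0 : (2%:R : K) != 0 by move/pcharf0P: charK0 => ->.
split=> [x|]; first exact: iff_trans (inspan_PgenP two_neq0 x) (iff_sym (inspan_vdP x)).
by split; [exact: inspan_vdP | split; [exact: act_uw_vd | exact: act_evs]].
Qed.
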